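(* Let $A^n,A^{n+1}$ be real $N\times N$ matrices satisfying condition (M), let $D=\mathrm{diag}(d_{11},\dots,d_{NN})$ with $d_{ii}>0$ and $\sum_i d_{ii}a^{n+1}_{ij}\ge0$ for all $j$, and let $B^n(\cdot),B^{n+1}(\cdot)$ be limiter-dependent matrices with $\sum_i d_{ii}b^{k}_{ij}(\alpha)=0$ for all $j$, all $\alpha$, $k=n,n+1$. Let $\sigma\in[0,1]$, $\gamma\in(0,1)$, $s_j=d_{jj}+\Delta t\,\sigma\sum_i d_{ii}a^{n+1}_{ij}$, and let $\Delta t>0$ satisfy $$\Delta t\max\left\{(1-\sigma)\|DB^n(\mathbf 1)\|_1,\ \sigma\|DB^{n+1}(\mathbf 1)\|_1\right\}\le\gamma\min_j s_j .$$ Let $y^n,g\in\mathbb R^N$, let $(\alpha^{n,p},\alpha^{n+1,p})\in[0,1]^{N-1}\times[0,1]^{N-1}$ for $p\ge1$ be arbitrary, set $y^{n+1,0}=y^n$ and define $y^{n+1,p}$ for $p\ge1$ by $$\left[E+\Delta t\,\sigma A^{n+1}\right]y^{n+1,p}=\left[E-\Delta t(1-\sigma)\left(A^n-B^n(\alpha^{n,p})\right)\right]y^n+\Delta t\,\sigma B^{n+1}(\alpha^{n+1,p})y^{n+1,p-1}+\Delta t\,g .$$ Put $T_p=\Delta t(1-\sigma)[E+\Delta t\sigma A^{n+1}]^{-1}B^n(\alpha^{n,p})$, $Q_p=\Delta t\,\sigma[E+\Delta t\sigma A^{n+1}]^{-1}B^{n+1}(\alpha^{n+1,p})$, $r=[E+\Delta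 t\sigma A^{n+1}]^{-1}\{[E-\Delta t(1-\sigma)A^n]y^n+\Delta t\,g\}$. Then for every $p\ge1$ $$y^{n+1,p}=\Big[\sum_{i=1}^pQ_pQ_{p-1}\cdots Q_{i+1}T_i+Q_pQ_{p-1}\cdots Q_1\Big]y^n+\Big[E+\sum_{i=2}^pQ_pQ_{p-1}\cdots Q_i\Big]r$$ (empty products being $E$), and $\|T_p\|_1\le\gamma$, $\|Q_p\|_1\le\gamma$ for all $p$; in particular each product of $m$ factors from $\{T_i\}\cup\{Q_i\}$ appearing above has $\|\cdot\|_1$-norm at most $\gamma^m$, so the terms are dominated, uniformly in $p$, by those of a convergent geometric series.
   Context: $E$ is the $N\times N$ identity. Condition (M) on a real $N\times N$ matrix $A=\{a_{ij}\}$: $a_{ii}\ge 0$ for all $i$ and $a_{ij}\le 0$ for all $i\ne j$. Norms: $\|y\|_1=\sum_i|y_i|$, $\|M\|_1=\max_j\sum_i|m_{ij}|$. A limiter-dependent matrix is a map $\alpha=(\alpha_1,\dots,\alpha_{N-1})\in\mathbb R^{N-1}\mapsto B(\alpha)=\{b_{ij}(\alpha)\}$ ($N\times N$) of the form $b_{ij}(\alpha)=\alpha_{\kappa(i,j)}\beta_{ij}$ for $i\ne j$ and $b_{ii}(\alpha)=-\sum_{j\ne i}b_{ij}(\alpha)$, where $\beta_{ij}\le0$ are fixed numbers and $\kappa(i,j)\in\{1,\dots,N-1\}$ are fixed indices. $\mathbf 1$ is the vector with all entries $1$. *)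

From HB Require Import structures.
From mathcomp Require Import all_boot all_order all_algebra.
Set Implicit Arguments. Unset Strict Implicit. Unset Printing Implicit Defensive.
Import Order.TTheory GRing.Theory Num.Theory.
Local Open Scope ring_scope.

Definition condM (R : realFieldType) (N : nat) (A : 'M[R]_N) : Prop :=
  (forall i, 0 <= A i i) /\ (forall i j, i != j -> A i j <= 0).

Definition norm1 (R : realFieldType) (N : nat) (M : 'M[R]_N) : R :=
  \big[Num.max/0]_(j < N) \sum_(i < N) `|M i j|.

(* B is a limiter-dependent matrix: alpha in R^{N-1} (row vector of size N.-1),
   b_ij(alpha) = alpha_{kappa(i,j)} beta_ij (i <> j), beta_ij <= 0,
   b_ii(alpha) = - sum_{j <> i} b_ij(alpha).  kappa is only needed for i <> j. *)
Definition limiter_matrix (R : realFieldType) (N : nat)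
    (B : 'rV[R]_(N.-1) -> 'M[R]_N) : Prop :=
  exists (beta : 'M[R]_N) (kappa : forall i j : 'I_N, i != j -> 'I_(N.-1)),
    (forall i j, i != j -> beta i j <= 0) /\
    (forall alpha i j (h : i != j), B alpha i j = alpha ord0 (kappa i j h) * beta i j) /\
    (forall alpha i, B alpha i i = - \sum_(j < N | j != i) B alpha i j).

(* prodQ Q i k = Q_{i+k-1} *m ... *m Q_{i+1} *m Q_i  (k factors; k = 0 gives E) *)
Fixpoint prodQ (R : realFieldType) (N : nat) (Q : nat -> 'M[R]_N) (i k : nat)
  : 'M[R]_N :=
  match k with
  | 0 => 1%:M
  | k'.+1 => Q (i + k')%N *m prodQ Q i k'
  end.

From HB Require Import structures.
From mathcomp Require Import all_boot all_order all_algebra.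
From mathcomp Require Import zify.
Import Order.TTheory GRing.Theory Num.Theory.
Local Open Scope ring_scope.
Set Implicit Arguments. Unset Strict Implicit.

(* The argument has three independent parts.
   1. The column-sum norm [norm1] is the maximum of the column sums of
      absolute values; we prove it is submultiplicative.
   2. For a matrix M with condition (M) and nonnegative weights d, the
      weighted column sums s_k = sum_i d_i M_ik satisfy
         sum_k s_k |X_kj| <= sum_i d_i |(M X)_ij|   for every X.
      If all s_k are positive this shows that M is invertible, and applied
      to X = M^-1 B it bounds the columns of M^-1 B in the s-weighted norm.
      Together with |B(alpha)_ij| <= |B(1)_ij| for limiters alpha in [0,1]
      and the time-step restriction, this gives ||T_p||_1, ||Q_p||_1 <= gamma.
   3. Solving each step for y^{n+1,p} gives y_p = r + T_p y^n + Q_p y_{p-1},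
      and unrolling this linear recurrence yields the closed formula. *)

(* The order lemmas on maxima, restated for [Num.max]: it denotes the same
   function as [Order.max], but only up to unfolding of its structure. *)
Lemma le_num_max (R : realFieldType) (x y z : R) :
  (z <= Num.max x y) = (z <= x) || (z <= y).
Proof. exact: le_max. Qed.

Lemma num_max_le (R : realFieldType) (x y z : R) :
  (Num.max x y <= z) = (x <= z) && (y <= z).
Proof. exact: ge_max. Qed.

Section ColumnSumNorm.
Variables (R : realFieldType) (N : nat).
Implicit Types (P Q : 'M[R]_N).

(* Restating the definition elaborates [Num.max] with the order structure
   of this file, which the order lemmas can then rewrite. *)
Lemma norm1E P : norm1 P = \big[Num.max/0]_(j < N) \sum_(i < N) `|P i j|.
Proof. by []. Qed.

Lemma norm1_ge0 P : 0 <= norm1 P.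
Proof.
rewrite norm1E; elim/big_ind: _ => //= [x y hx _|j _]; first by rewrite le_num_max hx.
by rewrite sumr_ge0.
Qed.

Lemma colsum_le_norm1 P j : \sum_i `|P i j| <= norm1 P.
Proof. by rewrite norm1E [X in _ <= X](bigD1 j) //= le_num_max lexx. Qed.

Lemma norm1_le P c : 0 <= c -> (forall j, \sum_i `|P i j| <= c) -> norm1 P <= c.
Proof.
move=> c0 hc; rewrite norm1E; elim/big_ind: _ => // x y hx hy.
by rewrite num_max_le hx hy.
Qed.

Lemma norm1M P Q : norm1 (P *m Q) <= norm1 P * norm1 Q.
Proof.
apply: norm1_le => [|j]; first by rewrite mulr_ge0 // norm1_ge0.
apply: (@le_trans _ _ (\sum_i \sum_k `|P i k| * `|Q k j|)).
  apply: ler_sum => i _; rewrite mxE; apply: le_trans (ler_norm_sum _ _ _) _.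
  by apply: ler_sum => k _; rewrite normrM.
rewrite exchange_big /=.
apply: (@le_trans _ _ (\sum_k norm1 P * `|Q k j|)).
  by apply: ler_sum => k _; rewrite -mulr_suml ler_wpM2r ?colsum_le_norm1.
by rewrite -mulr_sumr ler_wpM2l ?norm1_ge0 ?colsum_le_norm1.
Qed.

Lemma norm1_id : norm1 (1%:M : 'M[R]_N) <= 1.
Proof.
apply: norm1_le => // j; rewrite (bigD1 j) //= big1 ?addr0.
  by rewrite mxE eqxx mulr1n normr1.
by move=> i hi; rewrite mxE (negbTE hi) mulr0n normr0.
Qed.

Lemma norm1_prodQ (Qs : nat -> 'M[R]_N) gamma i k :
  0 <= gamma -> (forall p, (i <= p)%N -> norm1 (Qs p) <= gamma) ->
  norm1 (prodQ Qs i k) <= gamma ^+ k.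
Proof.
move=> g0 hQ; elim: k => [|k IH]; first by rewrite expr0 norm1_id.
rewrite /= exprS; apply: le_trans (norm1M _ _) _.
by rewrite ler_pM ?norm1_ge0 ?hQ ?leq_addr.
Qed.

End ColumnSumNorm.

Lemma pos_weighted_sum_eq0 (R : realFieldType) (N : nat) (s x : 'I_N -> R) :
  (forall k, 0 < s k) -> (forall k, 0 <= x k) ->
  \sum_k s k * x k <= 0 -> forall k, x k = 0.
Proof.
move=> hs hx hle k.
have hge k' : true -> 0 <= s k' * x k'.
  by move=> _; exact: mulr_ge0 (ltW (hs k')) (hx k').
have sum0 : \sum_k s k * x k = 0.
  by apply: le_anti; rewrite hle sumr_ge0.
have /eqP := psumr_eq0P hge sum0 (i := k) isT.
by rewrite mulf_eq0 (gt_eqF (hs k)) => /eqP.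
Qed.

Section MMatrix.
Variables (R : realFieldType) (N : nat).
Variables (M : 'M[R]_N) (d : 'I_N -> R).
Hypothesis hM : condM M.
Hypothesis d_ge0 : forall i, 0 <= d i.

Let s k := \sum_i d i * M i k.

(* Row i of M X: the nonnegative diagonal term dominates, since the
   off-diagonal entries of M are nonpositive. *)
Lemma condM_row_le (X : 'M[R]_N) i j :
  \sum_k M i k * `|X k j| <= `|(M *m X) i j|.
Proof.
case: hM => hdiag hoff.
rewrite mxE (bigD1 i) //= [X in _ <= `|X|](bigD1 i) //=.
apply: le_trans (lerB_normD _ _).
rewrite normrM (ger0_norm (hdiag i)) lerD2l lerNr -sumrN.
apply: le_trans (ler_norm_sum _ _ _) _.
apply: ler_sum => k hk; rewrite normrM ler0_norm ?mulNr //.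
by apply: hoff; rewrite eq_sym.
Qed.

Lemma condM_weighted_colsum (X : 'M[R]_N) j :
  \sum_k s k * `|X k j| <= \sum_i d i * `|(M *m X) i j|.
Proof.
have -> : \sum_k s k * `|X k j| = \sum_i d i * \sum_k M i k * `|X k j|.
  under eq_bigr => k _ do rewrite /s mulr_suml.
  rewrite exchange_big /=; apply: eq_bigr => i _.
  by rewrite mulr_sumr; apply: eq_bigr => k _; rewrite mulrA.
by apply: ler_sum => i _; rewrite ler_wpM2l ?condM_row_le.
Qed.

Hypothesis s_gt0 : forall k, 0 < s k.

(* Column diagonal dominance with positive weights makes M invertible: the
   cokernel of M is annihilated by M, hence vanishes by the estimate above. *)
Lemma condM_unitmx : M \in unitmx.
Proof.
have coker0 : cokermx M = 0.
  apply/matrixP => k j; rewrite [RHS]mxE.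
  have col0 : forall k, `|cokermx M k j| = 0.
    apply: (pos_weighted_sum_eq0 (x := fun k => `|cokermx M k j|) s_gt0) => [k'|].
      exact: normr_ge0.
    apply: le_trans (condM_weighted_colsum _ j) _; rewrite mulmx_coker.
    by rewrite big1 // => i _; rewrite mxE normr0 mulr0.
  by apply/eqP; rewrite -normr_eq0 col0.
have := mxrank_coker M; rewrite coker0 mxrank0 => rank_eq.
by rewrite -row_full_unit /row_full eqn_leq rank_leq_col /= -subn_eq0 -rank_eq.
Qed.

Lemma scaled_inverse_norm1_le (B : 'M[R]_N) c C gamma :
  0 <= c -> 0 <= gamma ->
  (forall j, \sum_i d i * `|B i j| <= C) -> (forall k, c * C <= gamma * s k) ->
  norm1 (c *: (invmx M *m B)) <= gamma.
Proof.
move=> c0 g0 hB hcC; apply: norm1_le => // j.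
set X := invmx M *m B.
have hX : \sum_k s k * `|X k j| <= C.
  have := condM_weighted_colsum X j; rewrite /X mulKVmx ?condM_unitmx // => hMX.
  exact: le_trans hMX (hB j).
under eq_bigr => i _ do rewrite mxE normrM (ger0_norm c0).
rewrite -mulr_sumr.
have [C_le0|C_gt0] := lerP C 0.
  have X0 := pos_weighted_sum_eq0 s_gt0 (fun k => normr_ge0 (X k j)) (le_trans hX C_le0).
  by rewrite big1 ?mulr0 // => k _; rewrite X0.
rewrite -(ler_pM2l C_gt0) mulrA (mulrC C) mulr_sumr.
apply: le_trans (_ : gamma * \sum_k s k * `|X k j| <= _); last first.
  by rewrite mulrC ler_wpM2r.
by rewrite mulr_sumr ler_sum // => k _; rewrite mulrA ler_wpM2r.
Qed.

End MMatrix.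

(* Limiters in [0,1] can only shrink the entries of a limiter-dependent
   matrix: off the diagonal b_ij(alpha) = alpha_k beta_ij, and on the diagonal
   b_ii(alpha) is a sum of such terms with a sign change. *)
Lemma limiter_entry_le (R : realFieldType) (N : nat)
    (B : 'rV[R]_(N.-1) -> 'M[R]_N) (alpha : 'rV[R]_(N.-1)) :
  limiter_matrix B -> (forall k, 0 <= alpha ord0 k <= 1) ->
  forall i j, `|B alpha i j| <= `|B (const_mx 1) i j|.
Proof.
case=> beta [kappa [beta_le0 [hoff hdiag]]] halpha.
have offdiag i k (hki : k != i) : B (const_mx 1) i k <= B alpha i k <= 0.
  have hik : i != k by rewrite eq_sym.
  rewrite !(hoff _ _ _ hik) mxE mul1r.
  have /andP[a0 a1] := halpha (kappa i k hik).
  rewrite mulr_ge0_le0 ?beta_le0 // andbT.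
  by rewrite -subr_ge0 -{2}(mul1r (beta i k)) -mulrBl mulr_le0 ?subr_le0 ?beta_le0.
move=> i j; have [<-|hij] := eqVneq i j; last first.
  have /andP[h1 h2] : B (const_mx 1) i j <= B alpha i j <= 0 by rewrite offdiag // eq_sym.
  by rewrite !ler0_norm ?lerN2 //; exact: le_trans h1 h2.
have sum_le0 alpha' (h : forall k, k != i -> B alpha' i k <= 0) :
    \sum_(k < N | k != i) B alpha' i k <= 0 by exact: sumr_le0.
rewrite !hdiag !ger0_norm ?oppr_ge0 ?lerN2.
- by apply: ler_sum => k hk; case/andP: (offdiag i k hk).
- by apply: sum_le0 => k hk; case/andP: (offdiag i k hk) => h1 h2; exact: le_trans h2.
- by apply: sum_le0 => k hk; case/andP: (offdiag i k hk).
Qed.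

Lemma limiter_weighted_colsum_le (R : realFieldType) (N : nat)
    (B : 'rV[R]_(N.-1) -> 'M[R]_N) (alpha : 'rV[R]_(N.-1)) (d : 'I_N -> R) :
  limiter_matrix B -> (forall k, 0 <= alpha ord0 k <= 1) -> (forall i, 0 <= d i) ->
  forall j, \sum_i d i * `|B alpha i j| <= norm1 (diag_mx (\row_i d i) *m B (const_mx 1)).
Proof.
move=> hB halpha d_ge0 j; apply: le_trans (colsum_le_norm1 _ j).
apply: ler_sum => i _; rewrite mul_diag_mx !mxE normrM (ger0_norm (d_ge0 i)).
by rewrite ler_wpM2l ?limiter_entry_le.
Qed.

Lemma solve_step (R : realFieldType) (N : nat) (M A B C : 'M[R]_N) (a b : R)
    (x u v h : 'cV[R]_N) :
  M \in unitmx -> M *m x = (1%:M - a *: (A - B)) *m u + b *: (C *m v) + h ->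
  x = invmx M *m ((1%:M - a *: A) *m u + h)
      + (a *: (invmx M *m B)) *m u + (b *: (invmx M *m C)) *m v.
Proof.
move=> hu step; rewrite -(mulKmx hu x) step scalerBr opprB addrA.
rewrite !mulmxDl !mulmxDr -!scalemxAl -!scalemxAr !mulmxA.
by rewrite (ACl (1*3*5*2*4))%AC.
Qed.

Lemma unroll_recurrence (R : realFieldType) (N : nat) (T Q : nat -> 'M[R]_N)
    (r : 'cV[R]_N) (y : nat -> 'cV[R]_N) :
  (forall p, (1 <= p)%N -> y p = r + T p *m y 0%N + Q p *m y p.-1) ->
  forall p, (1 <= p)%N ->
    y p = (\sum_(1 <= i < p.+1) prodQ Q i.+1 (p - i) *m T i + prodQ Q 1 p) *m y 0%N
          + (1%:M + \sum_(2 <= i < p.+1) prodQ Q i (p.+1 - i)) *m r.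
Proof.
move=> step [|p] // _; elim: p => [|p IH].
  rewrite step // big_nat1 big_geq // subnn /= addn0 mulmx1 !mul1mx addr0.
  by rewrite mulmxDl mul1mx (ACl (2*3*1))%AC.
(* Prepending Q_(p+2) to every product of the previous formula. *)
have prodQ_cons i k : (i + k)%N = p.+2 -> Q p.+2 *m prodQ Q i k = prodQ Q i k.+1.
  by move=> <-.
have sumT : \sum_(1 <= i < p.+2) prodQ Q i.+1 (p.+2 - i) *m T i
    = Q p.+2 *m \sum_(1 <= i < p.+2) prodQ Q i.+1 (p.+1 - i) *m T i.
  rewrite mulmx_sumr; apply: eq_big_nat => i /andP[_ hi].
  by rewrite mulmxA prodQ_cons; [congr (prodQ _ _ _ *m _); lia | lia].
have sumr : \sum_(2 <= i < p.+2) prodQ Q i (p.+3 - i)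
    = Q p.+2 *m \sum_(2 <= i < p.+2) prodQ Q i (p.+2 - i).
  rewrite mulmx_sumr; apply: eq_big_nat => i /andP[_ hi].
  by rewrite prodQ_cons; [congr (prodQ _ _ _); lia | lia].
rewrite (step p.+2) // IH (big_nat_recr p.+2 1) // (big_nat_recr p.+2 2) //.
rewrite subnn subSnn /= addn0 mulmx1 mul1mx sumT sumr.
rewrite !add1n !mulmxDl !mulmxDr !mulmxA mul1mx mulmx1.
by rewrite !addrA (ACl (3*2*4*1*6*5))%AC.
Qed.

Lemma condM_idDZ (R : realFieldType) (N : nat) (A : 'M[R]_N) (c : R) :
  condM A -> 0 <= c -> condM (1%:M + c *: A).
Proof.
case=> A_diag A_off c_ge0; split=> [i|i j hij]; rewrite !mxE.
  by rewrite eqxx mulr1n; exact: addr_ge0 ler01 (mulr_ge0 c_ge0 (A_diag i)).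
by rewrite (negbTE hij) mulr0n add0r; exact: mulr_ge0_le0 c_ge0 (A_off i j hij).
Qed.

Lemma weighted_colsum_idDZ (R : realFieldType) (N : nat) (A : 'M[R]_N) (c : R)
    (d : 'I_N -> R) k :
  \sum_i d i * (1%:M + c *: A) i k = d k + c * \sum_i d i * A i k.
Proof.
under eq_bigr => i _ do rewrite !mxE mulrDr mulrCA.
rewrite big_split /= -mulr_sumr (bigD1 k) //= eqxx mulr1n mulr1 big1 ?addr0 //.
by move=> i hi; rewrite (negbTE hi) mulr0n mulr0.
Qed.

Lemma limited_inverse_norm1_le (R : realFieldType) (N : nat) (M : 'M[R]_N)
    (d : 'I_N -> R) (B : 'rV[R]_(N.-1) -> 'M[R]_N) (alpha : 'rV[R]_(N.-1)) c gamma :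
  condM M -> (forall i, 0 <= d i) -> (forall k, 0 < \sum_i d i * M i k) ->
  limiter_matrix B -> (forall k, 0 <= alpha ord0 k <= 1) -> 0 <= c -> 0 <= gamma ->
  (forall k, c * norm1 (diag_mx (\row_i d i) *m B (const_mx 1))
             <= gamma * \sum_i d i * M i k) ->
  norm1 (c *: (invmx M *m B alpha)) <= gamma.
Proof.
move=> hM d_ge0 s_gt0 hB halpha c_ge0 gamma_ge0.
apply: (scaled_inverse_norm1_le hM d_ge0 s_gt0) => //.
exact: limiter_weighted_colsum_le.
Qed.

Unset Implicit Arguments. Set Strict Implicit.

Theorem theorem7 (R : realFieldType) (N : nat)
  (An An1 : 'M[R]_N) (d : 'I_N -> R)
  (Bn Bn1 : 'rV[R]_(N.-1) -> 'M[R]_N)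
  (sigma gamma dt : R) (yn g : 'cV[R]_N)
  (alphan alphan1 : nat -> 'rV[R]_(N.-1))
  (y : nat -> 'cV[R]_N) :
  condM An -> condM An1 ->
  (forall i, 0 < d i) ->
  (forall j, 0 <= \sum_(i < N) d i * An1 i j) ->
  limiter_matrix Bn -> limiter_matrix Bn1 ->
  (forall alpha j, \sum_(i < N) d i * Bn alpha i j = 0) ->
  (forall alpha j, \sum_(i < N) d i * Bn1 alpha i j = 0) ->
  0 <= sigma <= 1 -> 0 < gamma < 1 -> 0 < dt ->
  (let D := diag_mx (\row_i d i) in
   let s := fun j => d j + dt * sigma * \sum_(i < N) d i * An1 i j in
   forall j, dt * Num.max ((1 - sigma) * norm1 (D *m Bn (const_mx 1)))
                          (sigma * norm1 (D *m Bn1 (const_mx 1)))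
             <= gamma * s j) ->
  (forall p, (1 <= p)%N -> forall k, 0 <= alphan p ord0 k <= 1 /\ 0 <= alphan1 p ord0 k <= 1) ->
  y 0%N = yn ->
  (forall p, (1 <= p)%N ->
     (1%:M + (dt * sigma) *: An1) *m y p =
       (1%:M - (dt * (1 - sigma)) *: (An - Bn (alphan p))) *m yn
       + (dt * sigma) *: (Bn1 (alphan1 p) *m y p.-1) + dt *: g) ->
  let M := 1%:M + (dt * sigma) *: An1 in
  let T := fun p => (dt * (1 - sigma)) *: (invmx M *m Bn (alphan p)) in
  let Q := fun p => (dt * sigma) *: (invmx M *m Bn1 (alphan1 p)) in
  let r := invmx M *m ((1%:M - (dt * (1 - sigma)) *: An) *m yn + dt *: g) in
  (forall p, (1 <= p)%N ->
     y p = (\sum_(1 <= i < p.+1) prodQ Q i.+1 (p - i) *m T i + prodQ Q 1 p) *m yn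
           + (1%:M + \sum_(2 <= i < p.+1) prodQ Q i (p.+1 - i)) *m r)
  /\ (forall p, (1 <= p)%N -> norm1 (T p) <= gamma /\ norm1 (Q p) <= gamma)
  /\ (forall i k, (1 <= i)%N -> norm1 (prodQ Q i k) <= gamma ^+ k)
  /\ (forall i k, (1 <= i)%N -> norm1 (prodQ Q i.+1 k *m T i) <= gamma ^+ k.+1).
Proof.
move=> _ An1_condM d_gt0 colsumA1_ge0 limBn limBn1 _ _ /andP[sigma_ge0 sigma_le1]
  /andP[gamma_gt0 _] dt_gt0 dt_bound halpha y0 iteration M T Q r.
have d_ge0 i : 0 <= d i := ltW (d_gt0 i).
have gamma_ge0 : 0 <= gamma := ltW gamma_gt0.
have c1_ge0 : 0 <= dt * sigma by rewrite mulr_ge0 // ltW.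
have c2_ge0 : 0 <= dt * (1 - sigma) by rewrite mulr_ge0 ?subr_ge0 // ltW.
have condM_M : condM M := condM_idDZ An1_condM c1_ge0.
have colsumM_gt0 k : 0 < \sum_i d i * M i k.
  rewrite weighted_colsum_idDZ.
  exact: ltr_wpDr (mulr_ge0 c1_ge0 (colsumA1_ge0 k)) (d_gt0 k).
have restriction k :
  dt * (1 - sigma) * norm1 (diag_mx (\row_i d i) *m Bn (const_mx 1))
    <= gamma * \sum_i d i * M i k /\
  dt * sigma * norm1 (diag_mx (\row_i d i) *m Bn1 (const_mx 1))
    <= gamma * \sum_i d i * M i k.
  rewrite -!mulrA weighted_colsum_idDZ; split; apply: le_trans (dt_bound k);
    by rewrite ler_pM2l // le_num_max lexx ?orbT.
have TQ_le p : (1 <= p)%N -> norm1 (T p) <= gamma /\ norm1 (Q p) <= gamma.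
  move=> hp; have alpha_in k := halpha p hp k.
  split; apply: (limited_inverse_norm1_le condM_M d_ge0 colsumM_gt0) => // k;
    by [case: (alpha_in k) | case: (restriction k)].
have Qprod_le i k : (1 <= i)%N -> norm1 (prodQ Q i k) <= gamma ^+ k.
  move=> hi; apply: norm1_prodQ gamma_ge0 _ => p hp.
  by case: (TQ_le p (leq_trans hi hp)).
split; [|split=> //; split=> // i k hi].
- move=> p hp; rewrite -y0; apply: unroll_recurrence => // {}p {}hp.
  by rewrite y0; apply: solve_step (iteration p hp); exact: condM_unitmx colsumM_gt0.
- apply: le_trans (norm1M _ _) _; rewrite exprSr.
  apply: ler_pM; [exact: norm1_ge0 | exact: norm1_ge0 | exact: Qprod_le |].
  by case: (TQ_le i hi).
Qed.
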